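(* In the linear setting of the context, for all $\lambda>0$, $\sigma\in(0,1)$, $\theta\ge0$ and all $t\in[0,t_\infty)$, $$\eta(t)+\theta\big(\sigma x(t)^\top Qx(t)-2x(t)^\top PBKe(t^-)\big)\ge0\quad\text{and}\quad\eta(t)\ge0.$$ Moreover, for given $t_i$, $x(t_i)$ and $\eta(t_i)\ge0$, the next execution time given by the static rule $t^s_{i+1}=\inf\{t>t_i:\ \sigma x(t)^\top Qx(t)-2x(t)^\top PBKe(t^-)\le0\}$ is at most the next execution time $t^d_{i+1}$ given by the dynamic rule.
   Context: Consider $\dot x=Ax+Bu$, $x\in\mathbb{R}^n$, $u\in\mathbb{R}^m$, and a gain $K$ such that $A+BK$ is Hurwitz; let $P,Q$ be symmetric positive definite with $(A+BK)^\top P+P(A+BK)=-Q$, and $V(x)=x^\top Px$. The input is $u(t)=Kx(t_i)$ for $t\in[t_i,t_{i+1})$, with $e(t)=x(t_i)-x(t)$, so $\dot x=Ax+BK(x+e)$. $t_\infty=\lim t_i$ if infinitely many executions, else $+\infty$; $g(t^-)$ is the left limit. Dynamic event generator with parameters $\sigma\in(0,1)$, $\lambda>0$, $\theta\ge0$: $\dot\eta=-\lambda\eta+\sigma x^\top Qx-2x^\top PBKe$, $\eta(0)=0$ (resp. from $\eta(t_i)$ after $t_i$); $t_0=0$, $t_{i+1}=\inf\{t>t_i:\ \eta(t)+\theta(\sigma x(t)^\top Qx(t)-2x(t)^\top PBKe(t^-))\le0\}$. Assume $x(t_i)\ne0$ for all $i$. *)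

(* classical reals. Vectors of R^n are functions nat -> R
   (only indices < n matter), matrices are nat -> nat -> R. *)
From Stdlib Require Import Reals Lra.
Open Scope R_scope.

Definition Vec := nat -> R.
Definition Mat := nat -> nat -> R.

Fixpoint rsum (n : nat) (f : nat -> R) : R :=
  match n with
  | O => 0
  | S k => rsum k f + f k
  end.

Definition mv (k : nat) (M : Mat) (v : Vec) : Vec :=
  fun i => rsum k (fun j => M i j * v j).

Definition mm (k : nat) (M N : Mat) : Mat :=
  fun i j => rsum k (fun l => M i l * N l j).

Definition madd (M N : Mat) : Mat := fun i j => M i j + N i j.
Definition mtr (M : Mat) : Mat := fun i j => M j i.

Definition dot (n : nat) (u v : Vec) : R := rsum n (fun i => u i * v i).

Definition vnonzero (n : nat) (v : Vec) : Prop := exists j, (j < n)%nat /\ v j <> 0.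

Definition symmetric (n : nat) (M : Mat) : Prop :=
  forall i j, (i < n)%nat -> (j < n)%nat -> M i j = M j i.

Definition posdef (n : nat) (M : Mat) : Prop :=
  symmetric n M /\ forall v, vnonzero n v -> 0 < dot n v (mv n M v).

(* Hurwitz: every (complex) eigenvalue alpha + i beta, with eigenvector
   a + i b <> 0, has negative real part.  M(a+ib) = (alpha+i beta)(a+ib). *)
Definition hurwitz (n : nat) (M : Mat) : Prop :=
  forall (alpha beta : R) (a b : Vec),
    (exists j, (j < n)%nat /\ (a j <> 0 \/ b j <> 0)) ->
    (forall i, (i < n)%nat ->
        mv n M a i = alpha * a i - beta * b i /\
        mv n M b i = beta * a i + alpha * b i) ->
    alpha < 0.

Definition lyapunov (n : nat) (M P Q : Mat) : Prop :=
  forall i j, (i < n)%nat -> (j < n)%nat ->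
    madd (mm n (mtr M) P) (mm n P M) i j = - Q i j.

Definition is_inf (S : R -> Prop) (a : R) : Prop :=
  (forall s, S s -> a <= s) /\ (forall b, (forall s, S s -> b <= s) -> b <= a).

Definition closed_loop (m : nat) (A B K : Mat) : Mat := madd A (mm m B K).

Definition trig_term (n m : nat) (B K P Q : Mat) (sigma : R) (x e : Vec) : R :=
  sigma * dot n x (mv n Q x) - 2 * dot n x (mv n P (mv m B (mv n K e))).

(* x solves  xdot = A x + B K c  on all of R (c = held sample x(t_i)) *)
Definition solves_x (n m : nat) (A B K : Mat) (c : Vec) (x : R -> Vec) : Prop :=
  forall t i, (i < n)%nat ->
    derivable_pt_lim (fun s => x s i) t (mv n A (x t) i + mv m B (mv n K c) i).

Definition solves_eta (n m : nat) (B K P Q : Mat) (lam sigma : R) (c : Vec)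
    (x : R -> Vec) (eta : R -> R) : Prop :=
  forall t, derivable_pt_lim eta t
    (- lam * eta t + trig_term n m B K P Q sigma (x t) (fun j => c j - x t j)).

(* set of admissible execution indices: all of nat (infinitely many
   executions) or {0..N} (last execution t_N) *)
Definition valid_idx (fin : option nat) (i : nat) : Prop :=
  match fin with None => True | Some N => (i <= N)%nat end.

From Stdlib Require Import Reals Lra Lia Psatz Classical.
Open Scope R_scope.

(* Write g(t) = sigma x'Qx - 2 x'PBKe for the static triggering
   function and D(t) = eta(t) + theta g(t) for the dynamic one; along a flow
   segment eta' = -lam eta + g.
   - Weighted growth (mean value theorem applied to exp(k s) f(s)): if
     f(a) >= 0 and k f + f' > 0 on (a,b), then f(b) > 0.  With
     k = lam + 1/theta we get (k eta + eta') = D/theta, so D > 0 before the next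
     event keeps eta >= 0; with k = lam we get k eta + eta' = g, so as long as
     the static rule has not fired eta stays positive and D cannot vanish.
   - Before the infimum of the event set, a continuous D is positive, and by
     continuity D >= 0 up to and including the next event.
   Part 1 follows by induction over the executions (eta is continuous across
   events, eta(0) = 0 and D(0) = theta sigma x(0)'Qx(0) >= 0).  Part 2 follows
   because every dynamic trigger instant is preceded by a static one, so the
   static event set is nonempty and its infimum is below the dynamic one. *)

Definition static_trigger (n m : nat) (B K P Q : Mat) (sigma : R) (c : Vec)
    (x : R -> Vec) (t : R) : R :=
  trig_term n m B K P Q sigma (x t) (fun j => c j - x t j).

Definition dynamic_trigger (n m : nat) (B K P Q : Mat) (sigma theta : R)
    (c : Vec) (x : R -> Vec) (eta : R -> R) (t : R) : R :=
  eta t + theta * static_trigger n m B K P Q sigma c x t.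

Lemma derivable_pt_lim_exp_weight (k : R) (f : R -> R) (x l : R) :
  derivable_pt_lim f x l ->
  derivable_pt_lim (fun s => exp (k * s) * f s) x (exp (k * x) * (k * f x + l)).
Proof.
  intro Hf.
  assert (Hlin : derivable_pt_lim (fun s => k * s) x k).
  { pose proof (derivable_pt_lim_scal id k x 1 (derivable_pt_lim_id x)) as H.
    now rewrite Rmult_1_r in H. }
  assert (Hexp : derivable_pt_lim (fun s => exp (k * s)) x (exp (k * x) * k)).
  { exact (derivable_pt_lim_comp (fun s => k * s) exp x k (exp (k * x))
             Hlin (derivable_pt_lim_exp _)). }
  pose proof (derivable_pt_lim_mult _ _ _ _ _ Hexp Hf) as H.
  replace (exp (k * x) * (k * f x + l))
    with (exp (k * x) * k * f x + exp (k * x) * l) by ring.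
  exact H.
Qed.

Lemma weighted_growth (k : R) (f f' : R -> R) (a b : R) :
  a < b -> 0 <= f a ->
  (forall c, derivable_pt_lim f c (f' c)) ->
  (forall c, a < c < b -> 0 < k * f c + f' c) -> 0 < f b.
Proof.
  intros Hab Ha Hd Hpos.
  destruct (MVT_cor2 (fun s => exp (k * s) * f s)
              (fun s => exp (k * s) * (k * f s + f' s)) a b Hab)
    as [c [Hmvt Hc]].
  { intros c _. apply derivable_pt_lim_exp_weight, Hd. }
  pose proof (exp_pos (k * a)) as Ea; pose proof (exp_pos (k * b)) as Eb.
  assert (Hincr : 0 < exp (k * c) * (k * f c + f' c) * (b - a)).
  { pose proof (exp_pos (k * c)); pose proof (Hpos c Hc).
    apply Rmult_lt_0_compat; [apply Rmult_lt_0_compat|]; lra. }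
  assert (Hstart : 0 <= exp (k * a) * f a) by (apply Rmult_le_pos; lra).
  destruct (Rlt_or_le 0 (f b)) as [Hfb|Hfb]; [exact Hfb|].
  assert (exp (k * b) * f b <= 0) by nra.
  lra.
Qed.

Lemma negative_before (f : R -> R) (t : R) :
  continuity_pt f t -> f t < 0 -> forall a, a < t -> exists s, a < s < t /\ f s < 0.
Proof.
  intros Hc Hneg a Ha.
  destruct (Hc (- f t)) as [delta [Hdelta Hclose]]; [lra|].
  set (s := Rmax (t - delta / 2) ((a + t) / 2)).
  assert (s1 : t - delta / 2 <= s) by apply Rmax_l.
  assert (s2 : (a + t) / 2 <= s) by apply Rmax_r.
  assert (s3 : s < t) by (unfold s; apply Rmax_lub_lt; lra).
  exists s; split; [lra|].
  assert (Hd : R_dist (f s) (f t) < - f t).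
  { apply Hclose; split; [split; [exact I|lra]|].
    simpl; unfold R_dist; rewrite Rabs_left; lra. }
  unfold R_dist in Hd; apply Rabs_def2 in Hd; lra.
Qed.

Lemma is_inf_nonempty (S : R -> Prop) (a : R) : is_inf S a -> exists s, S s.
Proof.
  intros [_ Hglb]. apply NNPP; intro Hempty.
  assert (a + 1 <= a) by (apply Hglb; intros s Hs; exfalso; eauto).
  lra.
Qed.

Lemma is_inf_exists (S : R -> Prop) (lb : R) :
  (forall s, S s -> lb <= s) -> (exists s, S s) -> exists a, is_inf S a.
Proof.
  intros Hlb [s0 Hs0].
  set (E := fun y => S (- y)).
  assert (Hb : bound E) by (exists (- lb); intros y Hy; specialize (Hlb _ Hy); lra).
  assert (Hne : exists y, E y) by (exists (- s0); unfold E; now rewrite Ropp_involutive).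
  destruct (completeness E Hb Hne) as [l [Hub Hlub]].
  exists (- l); split.
  - intros s Hs. assert (- s <= l) by (apply Hub; unfold E; now rewrite Ropp_involutive).
    lra.
  - intros b Hb'. assert (l <= - b).
    { apply Hlub; intros y Hy. specialize (Hb' _ Hy); lra. }
    lra.
Qed.

Lemma inf_of_preceding_set (Ss Sd : R -> Prop) (lb td : R) :
  (forall s, Ss s -> lb <= s) ->
  (forall s, Sd s -> exists s', Ss s' /\ s' <= s) ->
  is_inf Sd td -> exists ts, ts <= td /\ is_inf Ss ts.
Proof.
  intros Hlb Hprec Hd.
  destruct (is_inf_nonempty _ _ Hd) as [sd Hsd].
  destruct (Hprec _ Hsd) as [ss [Hss _]].
  destruct (is_inf_exists Ss lb Hlb (ex_intro _ ss Hss)) as [ts Hts].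
  exists ts; split; [|exact Hts].
  apply (proj2 Hd); intros s Hs.
  destruct (Hprec _ Hs) as [s' [Hs' Hle]].
  pose proof (proj1 Hts _ Hs'); lra.
Qed.

Lemma before_first_event (D : R -> R) (t0 t1 t : R) :
  is_inf (fun s => t0 < s /\ D s <= 0) t1 ->
  continuity_pt D t -> t0 < t <= t1 ->
  0 <= D t /\ (forall s, t0 < s < t -> 0 < D s).
Proof.
  intros [Hlow _] Hc Ht.
  assert (Hpos : forall s, t0 < s < t1 -> 0 < D s).
  { intros s Hs. destruct (Rlt_or_le 0 (D s)) as [h|h]; [exact h|].
    assert (t1 <= s) by (apply Hlow; split; lra). lra. }
  split; [|intros s Hs; apply Hpos; lra].
  destruct (Rlt_or_le (D t) 0) as [Hneg|Hnn]; [|exact Hnn].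
  destruct (negative_before D t Hc Hneg t0 (proj1 Ht)) as [s [Hs Hds]].
  assert (t1 <= s) by (apply Hlow; split; lra). lra.
Qed.

Section FilteredVariable.
Variables (lam theta : R) (eta g : R -> R).
Hypothesis Htheta : 0 <= theta.
Hypothesis Heta : forall t, derivable_pt_lim eta t (- lam * eta t + g t).

Lemma filtered_nonneg (a b : R) :
  0 <= eta a -> a < b ->
  (forall s, a < s < b -> 0 < eta s + theta * g s) ->
  0 <= eta b + theta * g b -> 0 <= eta b.
Proof.
  intros Ha Hab Hpos Hb.
  destruct (Req_dec theta 0) as [->|Hnz]; [lra|].
  apply Rlt_le, (weighted_growth (lam + / theta) eta (fun s => - lam * eta s + g s) a b);
    auto.
  intros c Hc.
  replace ((lam + / theta) * eta c + (- lam * eta c + g c))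
    with (/ theta * (eta c + theta * g c)) by (field; lra).
  apply Rmult_lt_0_compat; [apply Rinv_0_lt_compat; lra|auto].
Qed.

Lemma static_fires_first (a t : R) :
  0 <= eta a -> a < t -> eta t + theta * g t <= 0 ->
  exists s, a < s <= t /\ g s <= 0.
Proof.
  intros Ha Hat Hfire.
  destruct (Rle_or_lt (g t) 0) as [Hg|Hg]; [exists t; split; [lra|exact Hg]|].
  apply NNPP; intro Hnone.
  assert (0 < eta t).
  { apply (weighted_growth lam eta (fun s => - lam * eta s + g s) a t); auto.
    intros c Hc. destruct (Rlt_or_le 0 (g c)) as [h|h]; [lra|].
    exfalso; apply Hnone; exists c; split; [lra|exact h]. }
  assert (0 <= theta * g t) by (apply Rmult_le_pos; lra).
  lra.
Qed.

End FilteredVariable.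

Lemma continuity_rsum (F : R -> nat -> R) (t0 : R) (k : nat) :
  (forall j, (j < k)%nat -> continuity_pt (fun t => F t j) t0) ->
  continuity_pt (fun t => rsum k (F t)) t0.
Proof.
  induction k as [|k IH]; intros HF; simpl.
  - now apply continuity_pt_const.
  - apply continuity_pt_plus; [apply IH; intros; apply HF; lia | apply HF; lia].
Qed.

Lemma continuity_mv (k : nat) (M : Mat) (v : R -> Vec) (t0 : R) :
  (forall j, (j < k)%nat -> continuity_pt (fun t => v t j) t0) ->
  forall i, continuity_pt (fun t => mv k M (v t) i) t0.
Proof.
  intros Hv i. apply continuity_rsum; intros j Hj.
  apply continuity_pt_mult; [now apply continuity_pt_const | auto].
Qed.

Lemma continuity_dot (k : nat) (u v : R -> Vec) (t0 : R) :
  (forall j, (j < k)%nat -> continuity_pt (fun t => u t j) t0) ->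
  (forall j, (j < k)%nat -> continuity_pt (fun t => v t j) t0) ->
  continuity_pt (fun t => dot k (u t) (v t)) t0.
Proof. intros Hu Hv. apply continuity_rsum; intros j Hj; apply continuity_pt_mult; auto. Qed.

Lemma static_trigger_continuous n m A B K P Q sigma c x t0 :
  solves_x n m A B K c x -> continuity_pt (static_trigger n m B K P Q sigma c x) t0.
Proof.
  intros Hx.
  assert (Cx : forall j, (j < n)%nat -> continuity_pt (fun t => x t j) t0).
  { intros j Hj. apply derivable_continuous_pt; eexists; now apply Hx. }
  assert (Ce : forall j, (j < n)%nat -> continuity_pt (fun t => c j - x t j) t0).
  { intros j Hj. apply continuity_pt_minus; [now apply continuity_pt_const | auto]. }
  unfold static_trigger, trig_term.
  apply continuity_pt_minus; apply continuity_pt_mult;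
    try (now apply continuity_pt_const); apply continuity_dot; auto;
    intros; repeat (apply continuity_mv; intros); auto.
Qed.

Lemma dynamic_trigger_continuous n m A B K P Q lam sigma theta c x eta t0 :
  solves_x n m A B K c x -> solves_eta n m B K P Q lam sigma c x eta ->
  continuity_pt (dynamic_trigger n m B K P Q sigma theta c x eta) t0.
Proof.
  intros Hx Heta. apply continuity_pt_plus.
  - apply derivable_continuous_pt; eexists; apply Heta.
  - apply continuity_pt_mult; [now apply continuity_pt_const|].
    now apply (static_trigger_continuous n m A).
Qed.

Lemma static_trigger_at_sample n m B K P Q sigma (x e : Vec) :
  0 < sigma -> posdef n Q -> vnonzero n x -> (forall j, e j = 0) ->
  0 < trig_term n m B K P Q sigma x e.
Proof.
  intros Hsigma HQ Hx He.
  assert (Hmv : forall k M (v : Vec), (forall j, v j = 0) -> forall i, mv k M v i = 0).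
  { intros k M v Hv i; unfold mv; induction k; simpl; [reflexivity|]. rewrite IHk, Hv; ring. }
  assert (Hdot : forall k (u v : Vec), (forall j, v j = 0) -> dot k u v = 0).
  { intros k u v Hv; unfold dot; induction k; simpl; [reflexivity|]. rewrite IHk, Hv; ring. }
  unfold trig_term. rewrite (Hdot n x (mv n P (mv m B (mv n K e)))); [|apply Hmv, Hmv, Hmv, He].
  pose proof (proj2 HQ x Hx). pose proof (Rmult_lt_0_compat _ _ Hsigma H). lra.
Qed.

Section DynamicExecution.
Variables (n m : nat) (A B K P Q : Mat) (lam sigma theta : R).
Hypotheses (Hsigma : 0 < sigma) (Htheta : 0 <= theta) (HQ : posdef n Q).
Variables (fin : option nat) (ts : nat -> R) (xs : nat -> R -> Vec) (etas : nat -> R -> R).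

Let D (i : nat) : R -> R :=
  dynamic_trigger n m B K P Q sigma theta (xs i (ts i)) (xs i) (etas i).

Hypothesis Hstart : ts 0%nat = 0.
Hypothesis Heta0 : etas 0%nat 0 = 0.
Hypothesis Hflow : forall i, valid_idx fin i ->
  vnonzero n (xs i (ts i)) /\
  solves_x n m A B K (xs i (ts i)) (xs i) /\
  solves_eta n m B K P Q lam sigma (xs i (ts i)) (xs i) (etas i).
Hypothesis Hjump : forall i, valid_idx fin (S i) ->
  xs (S i) (ts (S i)) = xs i (ts (S i)) /\ etas (S i) (ts (S i)) = etas i (ts (S i)).
Hypothesis Hevent : forall i, valid_idx fin (S i) ->
  is_inf (fun t => ts i < t /\ D i t <= 0) (ts (S i)).
Hypothesis Hlast : forall N, fin = Some N -> forall t, ts N < t -> ~ (D N t <= 0).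

Lemma valid_idx_pred (i : nat) : valid_idx fin (S i) -> valid_idx fin i.
Proof. destruct fin; simpl; lia. Qed.

Lemma trigger_on_interval (i : nat) (t : R) :
  valid_idx fin i -> ts i < t -> (valid_idx fin (S i) -> t <= ts (S i)) ->
  0 <= D i t /\ (forall s, ts i < s < t -> 0 < D i s).
Proof.
  intros Hv Ht Hbound.
  destruct (classic (valid_idx fin (S i))) as [Hv'|Hlast_i].
  - destruct (Hflow i Hv) as [_ [Hx Heta]].
    apply (before_first_event (D i) (ts i) (ts (S i))); auto.
    now apply (dynamic_trigger_continuous n m A B K P Q lam).
  - destruct fin as [N|]; simpl in Hv, Hlast_i; [|tauto].
    replace i with N in * by lia.
    assert (Hafter : forall s, ts N < s -> 0 < D N s)
      by (intros s Hs; apply Rnot_le_lt, (Hlast N eq_refl), Hs).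
    split; [apply Rlt_le, Hafter, Ht | intros s Hs; apply Hafter; lra].
Qed.

Lemma eta_nonneg_at_events (i : nat) : valid_idx fin i -> 0 <= etas i (ts i).
Proof.
  induction i as [|i IH]; intros Hv; [rewrite Hstart, Heta0; lra|].
  assert (Hle : ts i <= ts (S i)) by (apply (proj2 (Hevent i Hv)); intros s [Hs _]; lra).
  rewrite (proj2 (Hjump i Hv)).
  destruct (Rle_lt_or_eq_dec _ _ Hle) as [Hlt|<-]; [|apply IH, valid_idx_pred, Hv].
  pose proof (valid_idx_pred i Hv) as Hvi.
  destruct (trigger_on_interval i (ts (S i)) Hvi Hlt (fun _ => Rle_refl _)) as [Hend Hpos].
  destruct (Hflow i Hvi) as [_ [_ Heta]].
  apply (filtered_nonneg lam theta (etas i) (static_trigger n m B K P Q sigma (xs i (ts i)) (xs i))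
           Htheta Heta (ts i)); auto.
Qed.

Lemma dynamic_execution_invariant (i : nat) (t : R) :
  valid_idx fin i -> ((i = 0%nat /\ t = 0) \/ ts i < t) ->
  (valid_idx fin (S i) -> t <= ts (S i)) ->
  D i t >= 0 /\ etas i t >= 0.
Proof.
  intros Hv [[-> ->]|Ht] Hbound.
  - destruct (Hflow 0%nat Hv) as [Hnz _]; rewrite Hstart in Hnz.
    assert (Hg : 0 < static_trigger n m B K P Q sigma (xs 0%nat 0) (xs 0%nat) 0).
    { apply static_trigger_at_sample; auto. intros j; ring. }
    unfold D, dynamic_trigger; rewrite Hstart, Heta0.
    pose proof (Rmult_le_pos _ _ Htheta (Rlt_le _ _ Hg)); lra.
  - destruct (trigger_on_interval i t Hv Ht Hbound) as [Hend Hpos].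
    destruct (Hflow i Hv) as [_ [_ Heta]].
    split; [lra|apply Rle_ge].
    apply (filtered_nonneg lam theta (etas i) (static_trigger n m B K P Q sigma (xs i (ts i)) (xs i))
             Htheta Heta (ts i)); auto.
    now apply eta_nonneg_at_events.
Qed.

End DynamicExecution.

Lemma static_before_dynamic n m B K P Q lam sigma theta (ti : R) (x : R -> Vec)
    (eta : R -> R) (td : R) :
  0 <= theta -> 0 <= eta ti -> solves_eta n m B K P Q lam sigma (x ti) x eta ->
  is_inf (fun t => ti < t /\ dynamic_trigger n m B K P Q sigma theta (x ti) x eta t <= 0) td ->
  exists tsn, tsn <= td /\
    is_inf (fun t => ti < t /\ static_trigger n m B K P Q sigma (x ti) x t <= 0) tsn.
Proof.
  intros Htheta Hti Heta Hinf.
  eapply (inf_of_preceding_set _ _ ti td); [intros s [Hs _]; lra| |exact Hinf].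
  intros s [Hs Hfire].
  destruct (static_fires_first lam theta eta (static_trigger n m B K P Q sigma (x ti) x)
              Htheta Heta ti s Hti Hs Hfire) as [s' [Hs' Hg]].
  exists s'; split; [split; [lra|exact Hg] | lra].
Qed.

Theorem mainTheorem5 :
  forall (n m : nat) (A B K P Q : Mat) (lam sigma theta : R),
    0 < lam -> 0 < sigma < 1 -> 0 <= theta ->
    hurwitz n (closed_loop m A B K) ->
    posdef n P -> posdef n Q ->
    lyapunov n (closed_loop m A B K) P Q ->
  (* Part 1: the dynamic event-triggered closed loop *)
  (forall (fin : option nat) (ts : nat -> R)
          (xs : nat -> R -> Vec) (etas : nat -> R -> R),
     ts 0%nat = 0 ->
     etas 0%nat 0 = 0 ->
     (forall i, valid_idx fin i ->
        vnonzero n (xs i (ts i)) /\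
        solves_x n m A B K (xs i (ts i)) (xs i) /\
        solves_eta n m B K P Q lam sigma (xs i (ts i)) (xs i) (etas i)) ->
     (forall i, valid_idx fin (S i) ->
        xs (S i) (ts (S i)) = xs i (ts (S i)) /\
        etas (S i) (ts (S i)) = etas i (ts (S i))) ->
     (forall i, valid_idx fin (S i) ->
        is_inf (fun t => ts i < t /\
                  etas i t + theta * trig_term n m B K P Q sigma (xs i t)
                     (fun j => xs i (ts i) j - xs i t j) <= 0)
               (ts (S i))) ->
     (forall N, fin = Some N ->
        forall t, ts N < t ->
          ~ (etas N t + theta * trig_term n m B K P Q sigma (xs N t)
                (fun j => xs N (ts N) j - xs N t j) <= 0)) ->
     forall i t, valid_idx fin i ->
       ((i = 0%nat /\ t = 0) \/ ts i < t) ->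
       (valid_idx fin (S i) -> t <= ts (S i)) ->
       etas i t + theta * trig_term n m B K P Q sigma (xs i t)
                     (fun j => xs i (ts i) j - xs i t j) >= 0 /\
       etas i t >= 0)
  /\
  (* Part 2: static next execution time <= dynamic next execution time *)
  (forall (ti : R) (x : R -> Vec) (eta : R -> R) (td : R),
     vnonzero n (x ti) ->
     0 <= eta ti ->
     solves_x n m A B K (x ti) x ->
     solves_eta n m B K P Q lam sigma (x ti) x eta ->
     is_inf (fun t => ti < t /\
               eta t + theta * trig_term n m B K P Q sigma (x t)
                  (fun j => x ti j - x t j) <= 0) td ->
     exists tsn, tsn <= td /\
       is_inf (fun t => ti < t /\
                 trig_term n m B K P Q sigma (x t) (fun j => x ti j - x t j) <= 0) tsn).
Proof.
  intros n m A B K P Q lam sigma theta _ [Hsigma _] Htheta _ _ HQ _.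
  split.
  - intros fin ts xs etas Hstart Heta0 Hflow Hjump Hevent Hlast i t.
    exact (dynamic_execution_invariant n m A B K P Q lam sigma theta Hsigma Htheta HQ
             fin ts xs etas Hstart Heta0 Hflow Hjump Hevent Hlast i t).
  - intros ti x eta td _ Hti _ Heta Hinf.
    exact (static_before_dynamic n m B K P Q lam sigma theta ti x eta td Htheta Hti Heta Hinf).
Qed.
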